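(* Let $X$ be a compact metrizable space and let $\Delta$ be a set of Borel probability measures on $X$. The following are equivalent: (1) for any closed $V$ and open $U$ with $V\subseteq U$, there is a closed set $V'$ with $V\subseteq V'\subseteq U$ and $\mu(\partial V')=0$ for all $\mu\in\Delta$; (2) for any closed $V$ and open $U$ with $V\subseteq U$, there is an open set $V'$ with $V\subseteq V'\subseteq U$ and $\mu(\partial V')=0$ for all $\mu\in\Delta$; (3) for any $x\in X$ and any open $U\ni x$, there is a closed neighbourhood $V\subseteq U$ of $x$ with $\mu(\partial V)=0$ for all $\mu\in\Delta$; (4) for any $x\in X$ and any open $U\ni x$, there is an open neighbourhood $V\subseteq U$ of $x$ with $\mu(\partial V)=0$ for all $\mu\in\Delta$. *)

From HB Require Import structures.
From mathcomp Require Import all_boot all_order all_algebra.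
From mathcomp Require Import all_classical all_reals all_analysis.
Set Implicit Arguments. Unset Strict Implicit. Unset Printing Implicit Defensive.
Import Order.TTheory GRing.Theory Num.Theory.
Local Open Scope classical_set_scope.
Local Open Scope ring_scope.

Definition boundary {T : topologicalType} (A : set T) : set T :=
  closure A `\` interior A.

Definition borel_of (T : ptopologicalType) := g_sigma_algebraType (@open T).

From HB Require Import structures.
From mathcomp Require Import all_boot all_order all_algebra.
From mathcomp Require Import all_classical all_reals all_analysis.
Set Implicit Arguments. Unset Strict Implicit. Unset Printing Implicit Defensive.
Local Open Scope classical_set_scope.

(* The four conditions are linked by elementary boundary calculus:
   [boundary (~` A) = boundary A], and taking closures, interiors or finite
   unions does not enlarge the boundary beyond the original boundaries.  So
   (1) and (2) are dual under complementation, (2) gives (3) by shrinking U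
   to an open neighbourhood W of x with closure W inside U (compact Hausdorff
   spaces are regular), separating the closed set [set x] from W and closing
   up, and (3) gives (4) by taking interiors.  For (4) => (1), cover the
   compact set V by finitely many open sets with null boundaries and closures
   inside U; the closure of their union works, since null boundaries are
   stable under finite unions. *)

Section Boundary.
Variable T : topologicalType.
Implicit Types A B : set T.

Lemma boundary_closed A : closed (boundary A).
Proof.
rewrite /boundary setDE; apply: closedI; first exact: closed_closure.
by rewrite closedC; exact: open_interior.
Qed.

Lemma boundary_setC A : boundary (~` A) = boundary A.
Proof. by rewrite /boundary closure_setC interiorC !setDE setCK setIC. Qed.

Lemma boundary_closure_sub A : boundary (closure A) `<=` boundary A.
Proof.
move=> x [clx nintx]; split.
  by rewrite -(closure_id _).1 in clx => //; exact: closed_closure.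
by apply: contra_not nintx; apply: interiorS; exact: subset_closure.
Qed.

Lemma boundary_interior_sub A : boundary A° `<=` boundary A.
Proof.
move=> x [clx nintx]; split; first exact: (closureS (@interior_subset _ A)).
by rewrite (interior_id _).1 in nintx => //; exact: open_interior.
Qed.

Lemma boundary_setU_sub A B : boundary (A `|` B) `<=` boundary A `|` boundary B.
Proof.
move=> x [+ nintx]; rewrite closureU => -[clx|clx]; [left|right];
  split => //; apply: contra_not nintx; apply: interiorS;
  [exact: subsetUl | exact: subsetUr].
Qed.

End Boundary.

Lemma regular_open_nbhs_closure_sub (T : topologicalType) (x : T) (U : set T) :
  regular_space T -> open U -> U x ->
  exists W : set T, [/\ open W, W x & closure W `<=` U].
Proof.
move=> Treg oU Ux; have [V Vx clVU] := Treg x U (open_nbhs_nbhs (conj oU Ux)).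
exists V°; split; [exact: open_interior | exact: Vx |].
by apply: subset_trans clVU; apply: closureS; exact: interior_subset.
Qed.

Lemma compact_hausdorff_regular (T : topologicalType) :
  hausdorff_space T -> compact [set: T] -> regular_space T.
Proof. by move=> Thaus Tcpt x; exact: compact_regular Thaus Tcpt filterT. Qed.

Lemma compact_open_cover_fin_bigcup_closed (T : ptopologicalType)
    (G : set (set T)) (K : set T) :
  compact K -> G set0 -> setU_closed G ->
  (forall x, K x -> exists A, [/\ open A, A x & G A]) ->
  exists A, [/\ open A, K `<=` A & G A].
Proof.
move=> cK G0 GU Kcov.
pose OG := [set A : set T | open A /\ G A].
have /fin_bigcup_closedP OGfin : OG set0 /\ setU_closed OG.
  by split; [split; [exact: open0|] | move=> A B [oA GA] [oB GB]; split;
    [exact: openU | exact: GU]].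
move: cK; rewrite compact_cover => /(_ (set T) OG id) [||D DOG KD].
- by move=> A [].
- by move=> x /Kcov [A [oA Ax GA]]; exists A.
have [oD GD] := OGfin _ _ id (finite_fset D) (fun A AD => set_mem (DOG A AD)).
by eexists; split; [exact: oD | exact: KD | exact: GD].
Qed.

Section BorelBoundary.
Variables (T : ptopologicalType) (R : realType).
Implicit Types A B : set T.

Lemma closed_borel A : closed A -> measurable (A : set (borel_of T)).
Proof.
move=> cA; rewrite -(setCK A); apply: measurableC.
by apply: sub_sigma_algebra; exact: closed_openC.
Qed.

Lemma measurable_boundary A : measurable (boundary A : set (borel_of T)).
Proof. by apply: closed_borel; exact: boundary_closed. Qed.

Definition null_boundary (Delta : set (probability (borel_of T) R)) A :=
  forall mu, Delta mu -> mu (boundary A) = 0%E.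

Variable Delta : set (probability (borel_of T) R).

Lemma null_boundary_sub A B :
  boundary A `<=` boundary B -> null_boundary Delta B -> null_boundary Delta A.
Proof.
move=> AB nB mu Dmu.
exact: subset_measure0 (measurable_boundary A) (measurable_boundary B) AB
  (nB mu Dmu).
Qed.

Lemma null_boundary0 : null_boundary Delta set0.
Proof. by move=> mu _; rewrite /boundary closure0 set0D measure0. Qed.

Lemma null_boundaryU A B :
  null_boundary Delta A -> null_boundary Delta B ->
  null_boundary Delta (A `|` B).
Proof.
move=> nA nB mu Dmu.
have mA := measurable_boundary A; have mB := measurable_boundary B.
apply: (subset_measure0 (measurable_boundary (A `|` B)) (measurableU _ _ mA mB)
  (@boundary_setU_sub _ A B)).
exact: null_set_setU mA mB (nA mu Dmu) (nB mu Dmu).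
Qed.

End BorelBoundary.
Section NullBoundaryConditions.
Variables (T : ptopologicalType) (R : realType).
Variable Delta : set (probability (borel_of T) R).

Definition closed_null_boundary_between := forall V U : set T,
  closed V -> open U -> V `<=` U ->
  exists V' : set T,
    [/\ closed V', V `<=` V', V' `<=` U & null_boundary Delta V'].

Definition open_null_boundary_between := forall V U : set T,
  closed V -> open U -> V `<=` U ->
  exists V' : set T,
    [/\ open V', V `<=` V', V' `<=` U & null_boundary Delta V'].

Definition closed_null_boundary_nbhs := forall (x : T) (U : set T),
  open U -> U x ->
  exists V : set T, [/\ closed V, nbhs x V, V `<=` U & null_boundary Delta V].

Definition open_null_boundary_nbhs := forall (x : T) (U : set T),
  open U -> U x ->
  exists V : set T, [/\ open V, V x, V `<=` U & null_boundary Delta V].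

Lemma closed_between_open_between :
  closed_null_boundary_between -> open_null_boundary_between.
Proof.
move=> closed_between V U cV oU VU.
have [C [cC UC CV nC]] := closed_between (~` U) (~` V)
  (open_closedC oU) (closed_openC cV) (subsetC VU).
exists (~` C); split; [exact: closed_openC | | |].
- by rewrite -(setCK V); exact: subsetC.
- by rewrite -(setCK U); exact: subsetC.
- by move=> mu Dmu; rewrite boundary_setC; exact: nC.
Qed.

Lemma open_between_closed_nbhs : accessible_space T -> regular_space T ->
  open_null_boundary_between -> closed_null_boundary_nbhs.
Proof.
move=> Tacc Treg open_between x U oU Ux.
have [W [oW Wx clWU]] := regular_open_nbhs_closure_sub Treg oU Ux.
have xW : [set x] `<=` W by move=> y ->.
have [Q [oQ xQ QW nQ]] :=
  open_between [set x] W (accessible_closed_set1 Tacc (x:=x)) oW xW.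
exists (closure Q); split; [exact: closed_closure | | |].
- apply: filterS (@subset_closure _ Q) _.
  by apply: open_nbhs_nbhs; split => //; exact: xQ.
- by apply: subset_trans clWU; exact: closureS.
- exact: null_boundary_sub (@boundary_closure_sub _ Q) nQ.
Qed.

Lemma closed_nbhs_open_nbhs :
  closed_null_boundary_nbhs -> open_null_boundary_nbhs.
Proof.
move=> closed_nbhs x U oU Ux.
have [V [cV Vx VU nV]] := closed_nbhs x U oU Ux.
exists V°; split; [exact: open_interior | exact: Vx | |].
- by apply: subset_trans VU; exact: interior_subset.
- exact: null_boundary_sub (@boundary_interior_sub _ V) nV.
Qed.

Lemma open_nbhs_closed_between : compact [set: T] -> regular_space T ->
  open_null_boundary_nbhs -> closed_null_boundary_between.
Proof.
move=> Tcpt Treg open_nbhs V U cV oU VU.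
pose G := [set Z : set T | closure Z `<=` U /\ null_boundary Delta Z].
have G0 : G set0 by split; [rewrite closure0 | exact: null_boundary0].
have GU : setU_closed G.
  move=> A B [clAU nA] [clBU nB]; split; last exact: null_boundaryU.
  by rewrite closureU => y [/clAU|/clBU].
have cptV : compact V := subclosed_compact cV Tcpt (@subsetT _ V).
have [|A [oA VA [clAU nA]]] := compact_open_cover_fin_bigcup_closed cptV G0 GU.
  move=> x Vx.
  have [W [oW Wx clWU]] := regular_open_nbhs_closure_sub Treg oU (VU x Vx).
  have [Q [oQ Qx QW nQ]] := open_nbhs x W oW Wx.
  exists Q; split => //; split => //.
  by apply: subset_trans clWU; exact: closureS.
exists (closure A); split; [exact: closed_closure | | exact: clAU |].
- exact: subset_trans VA (@subset_closure _ A).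
- exact: null_boundary_sub (@boundary_closure_sub _ A) nA.
Qed.

End NullBoundaryConditions.

Theorem lemma2p1 (R : realType) (X : pseudoPMetricType R)
  (Xhaus : hausdorff_space X) (Xcpt : compact [set: X])
  (Delta : set (probability (borel_of X) R)) :
  [<->
   (* (1) *)
   (forall V U : set X, closed V -> open U -> V `<=` U ->
      exists V' : set X, [/\ closed V', V `<=` V', V' `<=` U &
        forall mu, Delta mu -> mu (boundary V') = 0%E]);
   (* (2) *)
   (forall V U : set X, closed V -> open U -> V `<=` U ->
      exists V' : set X, [/\ open V', V `<=` V', V' `<=` U &
        forall mu, Delta mu -> mu (boundary V') = 0%E]);
   (* (3) *)
   (forall (x : X) (U : set X), open U -> U x ->
      exists V : set X, [/\ closed V, nbhs x V, V `<=` U &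
        forall mu, Delta mu -> mu (boundary V) = 0%E]);
   (* (4) *)
   (forall (x : X) (U : set X), open U -> U x ->
      exists V : set X, [/\ open V, V x, V `<=` U &
        forall mu, Delta mu -> mu (boundary V) = 0%E])].
Proof.
have Xreg := compact_hausdorff_regular Xhaus Xcpt.
tfae.
- exact: closed_between_open_between.
- exact: open_between_closed_nbhs (hausdorff_accessible Xhaus) Xreg.
- exact: closed_nbhs_open_nbhs.
- exact: open_nbhs_closed_between Xcpt Xreg.
Qed.
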